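(* Consider an instance of the problem $P_m \mid r_j \le d \mid \sum w_j F_j$ as defined in the context (finite job set $J$, processing times $p_j>0$, weights $w_j>0$, deadline $d\ge 0$, $m\ge 1$ identical machines). In every optimal solution $(\pi_1,\dots,\pi_m)$, for each machine $i$, the jobs of $J_{\mathrm{late}}(\pi_i)$ (the jobs on machine $i$ starting at or after $d$) appear in $\pi_i$ in nondecreasing order of the ratio $p_j/w_j$ (i.e. they are sorted according to the WSPT rule).
   Context: An instance consists of a finite set $J$ of jobs, each job $j$ having a processing time $p_j>0$ and a weight $w_j>0$, a common deadline $d\ge 0$, and a number $m\ge 1$ of identical machines. A single-machine schedule is a finite sequence $\pi$ of distinct jobs processed consecutively without idle time starting at time $0$: the start time of job $j$ in $\pi$ is $S_j=\sum_{k \text{ before } j \text{ in } \pi} p_k$ and its completion time is $C_j=S_j+p_j$. Let $J_{\mathrm{pri}}(\pi)=\{j\in\pi : S_j<d\}$ and $J_{\mathrm{late}}(\pi)=\{j\in\pi: S_j\ge d\}$. The cost of $\pi$ is $$\phi(\pi)=\sum_{j\in J_{\mathrm{pri}}(\pi)} w_j p_j+\sum_{j\in J_{\mathrm{late}}(\pi)} w_j\,(C_j-d).$$ (This is the total weighted flowtime $\sum_j w_j(C_j-r_j)$ when each release date $r_j$ is a decision variable constrained by $r_j\le d$ and chosen optimally as $r_j=\min(S_j,d)$.) A solution is a tuple $(\pi_1,\dots,\pi_m)$ of single-machine schedules such that every job of $J$ appears in exactly one $\pi_i$; its cost is $\sum_{i=1}^m\phi(\pi_i)$, and a solution is optimal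 if its cost is minimal among all solutions. This problem is denoted $P_m \mid r_j \le d \mid \sum w_j F_j$. *)

From HB Require Import structures.
From mathcomp Require Import all_boot all_order all_algebra.
Set Implicit Arguments. Unset Strict Implicit. Unset Printing Implicit Defensive.
Import Order.TTheory GRing.Theory Num.Theory.
Local Open Scope ring_scope.

Section Sched.
Variables (R : realFieldType) (J : finType).
Variables (p w : J -> R) (d : R).

Definition start (s : seq J) (j : J) : R :=
  \sum_(k <- take (index j s) s) p k.

Fixpoint phi_from (t : R) (s : seq J) : R :=
  match s with
  | [::] => 0
  | j :: s' =>
      (if t < d then w j * p j else w j * (t + p j - d)) + phi_from (t + p j) s'
  end.

Definition phi (s : seq J) : R := phi_from 0 s.

Definition late_jobs (s : seq J) : seq J := [seq j <- s | d <= start s j].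

Definition is_solution (m : nat) (pi : 'I_m -> seq J) : Prop :=
  (forall i, uniq (pi i)) /\ (forall j : J, exists! i : 'I_m, j \in pi i).

Definition total_cost (m : nat) (pi : 'I_m -> seq J) : R := \sum_(i < m) phi (pi i).

Definition is_optimal (m : nat) (pi : 'I_m -> seq J) : Prop :=
  is_solution pi /\
  forall sigma : 'I_m -> seq J, is_solution sigma -> total_cost pi <= total_cost sigma.

End Sched.

From HB Require Import structures.
From mathcomp Require Import all_boot all_order all_algebra.
From mathcomp Require Import ring lra.
Set Implicit Arguments. Unset Strict Implicit. Unset Printing Implicit Defensive.
Import Order.TTheory GRing.Theory Num.Theory.
Local Open Scope ring_scope.

(* Exchange argument: in an optimal solution, swapping two adjacent jobs of a
   machine yields another solution, so it cannot decrease the cost of that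
   machine. Once the current time has passed d, every remaining job is late
   and interchanging adjacent jobs a, b changes the cost by w_b p_a - w_a p_b,
   so the late suffix is in WSPT order. *)

Section SingleMachine.
Variables (R : realFieldType) (J : finType) (p w : J -> R) (d : R).
Hypothesis hp : forall j, 0 < p j.
Hypothesis hw : forall j, 0 < w j.

Definition wspt (a b : J) : bool := p a / w a <= p b / w b.

Definition late_from (t : R) (s : seq J) : seq J :=
  [seq j <- s | d <= t + start p s j].

Lemma late_jobs_from0 s : late_jobs p d s = late_from 0 s.
Proof. by apply: eq_filter => j; rewrite add0r. Qed.

Lemma start_cons j s x :
  start p (j :: s) x = if j == x then 0 else p j + start p s x.
Proof. by rewrite /start /=; case: eqP => _; rewrite ?big_nil // big_cons. Qed.

Lemma start_ge0 s x : 0 <= start p s x.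
Proof. by apply: sumr_ge0 => k _; exact: ltW. Qed.

Lemma late_from_cons t j s : j \notin s ->
  late_from t (j :: s) =
    if d <= t then j :: late_from (t + p j) s else late_from (t + p j) s.
Proof.
move=> jNs; rewrite /late_from /= start_cons eqxx addr0.
have -> : [seq x <- s | d <= t + start p (j :: s) x] = late_from (t + p j) s.
  apply: eq_in_filter => x xs; rewrite start_cons -addrA.
  by case: eqP => // jx; rewrite jx xs in jNs.
by [].
Qed.

Lemma late_from_past t s : d <= t -> late_from t s = s.
Proof.
move=> dt; apply/all_filterP/allP => x _.
by have := start_ge0 s x; lra.
Qed.

Definition swap_stable (t : R) (s : seq J) : Prop :=
  forall s1 a b s2, s = s1 ++ a :: b :: s2 ->
    phi_from p w d t s <= phi_from p w d t (s1 ++ b :: a :: s2).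

Lemma swap_stable_behead t j s : swap_stable t (j :: s) -> swap_stable (t + p j) s.
Proof.
move=> stable s1 a b s2 e.
by have := stable (j :: s1) a b s2; rewrite e /= lerD2l; apply.
Qed.

Lemma wspt_exchange t a b s : d <= t ->
  phi_from p w d t (a :: b :: s) <= phi_from p w d t (b :: a :: s) -> wspt a b.
Proof.
move=> dt; rewrite /= !ltNge dt.
have -> : d <= t + p a by have := hp a; lra.
have -> : d <= t + p b by have := hp b; lra.
rewrite /= (addrAC t (p b) (p a)) => cost_le.
have wa := hw a; have wb := hw b.
rewrite /wspt ler_pdivrMr // mulrAC ler_pdivlMr //.
nra.
Qed.

Lemma swap_stable_past_sorted t s : d <= t -> swap_stable t s -> sorted wspt s.
Proof.
elim: s t => [|j [|b s2] IH] t //= dt stable.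
have dtj : d <= t + p j by have := hp j; lra.
rewrite (wspt_exchange dt (stable [::] j b s2 erefl)).
exact: IH dtj (swap_stable_behead stable).
Qed.

Lemma swap_stable_sorted_late t s :
  uniq s -> swap_stable t s -> sorted wspt (late_from t s).
Proof.
elim: s t => [|j s IH] t //= /andP [jNs us] stable.
rewrite late_from_cons //; case: ifP => dt.
  have dtj : d <= t + p j by have := hp j; lra.
  by rewrite late_from_past //; exact: swap_stable_past_sorted dt stable.
exact: IH us (swap_stable_behead stable).
Qed.

End SingleMachine.

Section Machines.
Variables (R : realFieldType) (J : finType) (p w : J -> R) (d : R) (m : nat).

Definition set_schedule (pi : 'I_m -> seq J) (i : 'I_m) (s : seq J) : 'I_m -> seq J :=
  fun k => if k == i then s else pi k.

Lemma set_schedule_solution (pi : 'I_m -> seq J) (i : 'I_m) (s : seq J) :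
  is_solution pi -> perm_eq (pi i) s -> is_solution (set_schedule pi i s).
Proof.
move=> [uniq_pi exists1] pe.
have mem k x : (x \in set_schedule pi i s k) = (x \in pi k).
  by rewrite /set_schedule; have [->|_] := eqVneq k i; rewrite ?(perm_mem pe).
split=> [k | x].
  by rewrite /set_schedule; case: eqP => _; rewrite -?(perm_uniq pe).
have [k [xk k_unique]] := exists1 x.
by exists k; split=> [|k']; rewrite mem //; apply: k_unique.
Qed.

Lemma total_cost_set_schedule (pi : 'I_m -> seq J) (i : 'I_m) (s : seq J) :
  total_cost p w d (set_schedule pi i s) - phi p w d s =
  total_cost p w d pi - phi p w d (pi i).
Proof.
rewrite /total_cost (bigD1 i) //= [in RHS](bigD1 i) //= /set_schedule eqxx.
rewrite [LHS]addrC [RHS]addrC !addKr.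
by apply: eq_bigr => k /negbTE ->.
Qed.

Lemma optimal_phi_le_perm (pi : 'I_m -> seq J) (i : 'I_m) (s : seq J) :
  is_optimal p w d pi -> perm_eq (pi i) s -> phi p w d (pi i) <= phi p w d s.
Proof.
move=> [sol opt] pe.
have := opt _ (set_schedule_solution sol pe).
have := total_cost_set_schedule pi i s; lra.
Qed.

End Machines.

Theorem lemma1 (R : realFieldType) (J : finType) (p w : J -> R) (d : R) (m : nat)
  (hp : forall j, 0 < p j) (hw : forall j, 0 < w j) (hd : 0 <= d) (hm : (0 < m)%N)
  (pi : 'I_m -> seq J) :
  is_optimal p w d pi ->
  forall i : 'I_m,
    sorted (fun a b => p a / w a <= p b / w b) (late_jobs p d (pi i)).
Proof.
move=> opt i; rewrite late_jobs_from0.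
apply: (swap_stable_sorted_late hp hw); first by case: opt => [[]].
move=> s1 a b s2 e; apply: optimal_phi_le_perm opt _.
by rewrite e perm_cat2l -(cat1s a) -(cat1s b) perm_catCA.
Qed.
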